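(* The Dirac operator $\mathcal{D}$ satisfies $\mathcal{D}=c\circ\overleftarrow{\nabla}^{\mathcal{S}}: \mathcal{S}\to L^{2}(S,h)$.
   Context: $\mathcal{B}=\mathcal{O}(S^2_q)$, $q\in(0,1]$, with spinor module $\mathcal{S}=\mathcal{S}^+\oplus\mathcal{S}^-$, $\mathcal{S}^\pm=\mathrm{span}\{t^l_{i,\pm1/2}b:b\in\mathcal{B}\}$, Hilbert space $L^2(S,h)$ ($h$ the Haar state) and Dabrowski--Sitarz Dirac operator $\mathcal{D}=\begin{pmatrix}0&\partial_e\\ \partial_f&0\end{pmatrix}$. $\mathcal{S}^\pm$ carry left inner products ${}_{\mathcal{B}}\langle s_+,t_+\rangle=qs_+t_+^*$, ${}_{\mathcal{B}}\langle s_-,t_-\rangle=q^{-1}s_-t_-^*$, with left frames $s_{i,+}=q^{-1/2}t^{1/2}_{i,1/2}$ and $s_{i,-}=q^{1/2}t^{1/2}_{i,-1/2}$, $i=\pm1/2$. $\overleftarrow{\nabla}^{\mathcal{S}}=\overleftarrow{\nabla}^{\mathcal{S}^+}\oplus\overleftarrow{\nabla}^{\mathcal{S}^-}$ is the sum of the left Grassmann connections of these frames, $\overleftarrow{\nabla}(x)=\sum_i[\mathcal{D},{}_{\mathcal{B}}\langle x,s_i\rangle]\otimes s_i$, and $c:\Omega^1_{\mathcal{D}}(\mathcal{B})\otimes_{\mathcal{B}}\mathcal{S}\to\mathcal{S}$ is the Clifford action of one-forms (operators on $L^2(S,h)$) on spinors. *)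

From HB Require Import structures.
From mathcomp Require Import all_boot all_order all_algebra.
Set Implicit Arguments. Unset Strict Implicit. Unset Printing Implicit Defensive.
Import Order.TTheory GRing.Theory Num.Theory.
Local Open Scope ring_scope.

(* Indices i, j in {-1/2, +1/2} are encoded as bool: false = -1/2, true = +1/2. *)

Section SUq2.
Variables (C : numClosedFieldType) (A : lalgType C) (q : C).
Variable star : A -> A.
Variables (a c : A).

Definition tmat (i j : bool) : A :=
  match i, j with
  | false, false => a
  | false, true  => - (q *: star c)
  | true,  false => c
  | true,  true  => star a
  end.

Record is_SUq2 : Prop := {
  star_add : forall x y, star (x + y) = star x + star y;
  star_scale : forall (k : C) x, star (k *: x) = (k^* ) *: star x;
  star_mul : forall x y, star (x * y) = star y * star x;
  star_one : star 1 = 1;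
  star_inv : forall x, star (star x) = x;
  rel_ac : a * c = q *: (c * a);
  rel_acs : a * star c = q *: (star c * a);
  rel_ccs : c * star c = star c * c;
  rel_unit1 : star a * a + star c * c = 1;
  rel_unit2 : a * star a + (q ^+ 2) *: (c * star c) = 1
}.

Variables (de df dk dkinv : A -> A).

(* The left action of U_q(su(2)) (generators e, f, k, k^{-1}) on O(SU_q(2)),
   acting on the second index of t^{1/2}, with coproduct
   De = e (x) k + k^{-1} (x) e,  Df = f (x) k + k^{-1} (x) f,  Dk = k (x) k. *)
Record is_Uq_action : Prop := {
  de_lin : forall (k : C) x y, de (k *: x + y) = k *: de x + de y;
  df_lin : forall (k : C) x y, df (k *: x + y) = k *: df x + df y;
  dk_lin : forall (k : C) x y, dk (k *: x + y) = k *: dk x + dk y;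
  dkinv_lin : forall (k : C) x y, dkinv (k *: x + y) = k *: dkinv x + dkinv y;
  dk_mul : forall x y, dk (x * y) = dk x * dk y;
  dkinv_mul : forall x y, dkinv (x * y) = dkinv x * dkinv y;
  dk_one : dk 1 = 1;
  dkinv_one : dkinv 1 = 1;
  dk_dkinv : forall x, dk (dkinv x) = x;
  dkinv_dk : forall x, dkinv (dk x) = x;
  de_mul : forall x y, de (x * y) = de x * dk y + dkinv x * de y;
  df_mul : forall x y, df (x * y) = df x * dk y + dkinv x * df y;
  dk_tp : forall i, dk (tmat i true) = sqrtC q *: tmat i true;
  dk_tm : forall i, dk (tmat i false) = (sqrtC q)^-1 *: tmat i false;
  de_tp : forall i, de (tmat i true) = 0;
  de_tm : forall i, de (tmat i false) = tmat i true;
  df_tp : forall i, df (tmat i true) = tmat i false;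
  df_tm : forall i, df (tmat i false) = 0
}.

Definition in_B (x : A) : Prop := dk x = x.

Definition in_Splus (x : A) : Prop :=
  exists b : bool -> A, (forall i, in_B (b i)) /\ x = \sum_(i : bool) tmat i true * b i.
Definition in_Sminus (x : A) : Prop :=
  exists b : bool -> A, (forall i, in_B (b i)) /\ x = \sum_(i : bool) tmat i false * b i.

(* Spinors s = (s+, s-) in S = S^+ (+) S^- (viewed inside L^2(S,h)). *)
Definition Dirac (s : A * A) : A * A := (de s.2, df s.1).

Definition lmul (b : A) (s : A * A) : A * A := (b * s.1, b * s.2).

(* The one-form [D, b] applied to a spinor (Clifford action). *)
Definition commD (b : A) (s : A * A) : A * A := Dirac (lmul b s) - lmul b (Dirac s).

Definition ip_plus (s t : A) : A := q *: (s * star t).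
Definition ip_minus (s t : A) : A := q^-1 *: (s * star t).
Definition frame_plus (i : bool) : A := (sqrtC q)^-1 *: tmat i true.
Definition frame_minus (i : bool) : A := sqrtC q *: tmat i false.

(* c o nabla^S, where nabla^{S+-}(x) = sum_i [D, <x, s_i>] (x) s_i and
   c([D,b] (x) s) = [D,b] s. *)
Definition clifford_grassmann (s : A * A) : A * A :=
  \sum_(i : bool) commD (ip_plus s.1 (frame_plus i)) (frame_plus i, 0)
  + \sum_(i : bool) commD (ip_minus s.2 (frame_minus i)) (0, frame_minus i).

End SUq2.

From mathcomp Require Import all_boot all_order all_algebra.
Set Implicit Arguments. Unset Strict Implicit. Unset Printing Implicit Defensive.
Import GRing.Theory Num.Theory.
Local Open Scope ring_scope.

(* Since c([D, b] (x) s) = D(b s) - b D s, summing over a frame gives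
   c(nabla x) = D(sum_i <x, s_i> s_i) - sum_i <x, s_i> D s_i.  The first sum
   is x (frame reconstruction) and the second vanishes, because D maps the
   frame of S^+ (resp. S^-) onto the other column of the unitary matrix
   t^{1/2}, which is orthogonal to the column the frame is taken from. *)

Section StarScalars.
Variables (C : numClosedFieldType) (A : lalgType C) (star : A -> A).
Hypotheses (starZ : forall (k : C) x, star (k *: x) = k^* *: star x)
  (starM : forall x y, star (x * y) = star y * star x)
  (star1 : star 1 = 1) (starK : involutive star).

Lemma star_scalerAr (k : C) (x y : A) : x * (k *: y) = k *: (x * y).
Proof.
have xk1 : x * (k *: 1) = k *: x.
  by apply: (can_inj starK); rewrite starM !starZ star1 -scalerAl mul1r.
have -> : k *: y = (k *: 1) * y by rewrite -scalerAl mul1r.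
by rewrite mulrA xk1 scalerAl.
Qed.

Lemma starN (x : A) : star (- x) = - star x.
Proof. by rewrite -scaleN1r starZ rmorphN1 scaleN1r. Qed.

End StarScalars.

Section RawLinear.
Variables (R : pzRingType) (V : lmodType R) (f : V -> V).
Hypothesis f_lin : forall (k : R) x y, f (k *: x + y) = k *: f x + f y.

Lemma raw_linear0 : f 0 = 0.
Proof.
apply: (addrI (f 0)); rewrite addr0.
by have := f_lin 1 0 0; rewrite !scale1r addr0.
Qed.

Lemma raw_linearD x y : f (x + y) = f x + f y.
Proof. by rewrite -[x]scale1r f_lin !scale1r. Qed.

Lemma raw_linearZ k x : f (k *: x) = k *: f x.
Proof. by rewrite -[k *: x]addr0 f_lin raw_linear0 addr0. Qed.

Lemma raw_linear_sum (I : finType) (F : I -> V) : f (\sum_i F i) = \sum_i f (F i).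
Proof. exact: (big_morph f raw_linearD raw_linear0). Qed.

End RawLinear.

Section CliffordCommutator.
Variables (C : numClosedFieldType) (A : lalgType C) (de df : A -> A).

Lemma commDE b s :
  commD de df b s = (de (b * s.2) - b * de s.2, df (b * s.1) - b * df s.1).
Proof. by []. Qed.

Hypotheses (de_linear : forall (k : C) x y, de (k *: x + y) = k *: de x + de y)
  (df_linear : forall (k : C) x y, df (k *: x + y) = k *: df x + df y).

Lemma sum_commD_plus (I : finType) (b f : I -> A) :
  \sum_i commD de df (b i) (f i, 0)
  = (0, df (\sum_i b i * f i) - \sum_i b i * df (f i)).
Proof.
rewrite (raw_linear_sum df_linear) -sumrB.
apply: (big_ind2 (fun p v => p = (0, v))) => [//|_ v _ w -> ->|i _].
  by congr pair; rewrite addr0.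
by rewrite commDE /= mulr0 (raw_linear0 de_linear) mulr0 subr0.
Qed.

Lemma sum_commD_minus (I : finType) (b g : I -> A) :
  \sum_i commD de df (b i) (0, g i)
  = (de (\sum_i b i * g i) - \sum_i b i * de (g i), 0).
Proof.
rewrite (raw_linear_sum de_linear) -sumrB.
apply: (big_ind2 (fun p v => p = (v, 0))) => [//|_ v _ w -> ->|i _].
  by congr pair; rewrite addr0.
by rewrite commDE /= mulr0 (raw_linear0 df_linear) mulr0 subr0.
Qed.

End CliffordCommutator.

Section SpinorFrames.
Variables (C : numClosedFieldType) (A : lalgType C) (q : C) (star : A -> A) (a c : A).
Hypotheses (q_gt0 : 0 < q) (HS : is_SUq2 q star a c).

Local Notation t := (tmat q star a c).
Local Notation s := (sqrtC q).

Let q_real : q^* = q. Proof. exact/conj_Creal/gtr0_real. Qed.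
Let s_gt0 : 0 < s. Proof. by rewrite sqrtC_gt0. Qed.
Let s_neq0 : s != 0. Proof. by rewrite lt0r_neq0. Qed.
Let s_real : s^* = s. Proof. exact/conj_Creal/gtr0_real. Qed.
Let sV_real : s^-1^* = s^-1. Proof. by apply/conj_Creal/gtr0_real; rewrite invr_gt0. Qed.
Let q_div_s : q / s = s. Proof. by rewrite -{1}[q]sqrtCK expr2 mulfK. Qed.

Let mulrZ (k : C) (x y : A) : x * (k *: y) = k *: (x * y).
Proof. exact: (star_scalerAr (star_scale HS) (star_mul HS) (star_one HS) (star_inv HS)). Qed.

Lemma tmat_unitary (j j' : bool) :
  \sum_i star (t i j) * t i j' = (j == j')%:R.
Proof.
case: HS => _ starZ starM _ starK rel_ac _ _ unit1 unit2.
case: j; case: j'; rewrite big_bool /= ?starK ?(starN starZ) ?starZ ?starK ?q_real.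
- by rewrite mulrNN -scalerAl mulrZ scalerA -expr2 unit2.
- by rewrite mulNr -scalerAl rel_ac subrr.
- by rewrite -starM rel_ac starZ starM q_real mulrN mulrZ subrr.
- by rewrite addrC unit1.
Qed.

Lemma sum_ip_plus_frame (x : A) (y : bool -> A) :
  \sum_i ip_plus q star x (frame_plus q star a c i) * y i
  = s *: (x * \sum_i star (t i true) * y i).
Proof.
rewrite mulr_sumr scaler_sumr; apply: eq_bigr => i _.
rewrite /ip_plus /frame_plus (star_scale HS) sV_real mulrZ scalerA.
by rewrite -scalerAl -mulrA q_div_s.
Qed.

Lemma sum_ip_minus_frame (x : A) (y : bool -> A) :
  \sum_i ip_minus q star x (frame_minus q star a c i) * y i
  = s^-1 *: (x * \sum_i star (t i false) * y i).
Proof.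
rewrite mulr_sumr scaler_sumr; apply: eq_bigr => i _.
rewrite /ip_minus /frame_minus (star_scale HS) s_real mulrZ scalerA.
by rewrite -scalerAl -mulrA mulrC -invf_div q_div_s.
Qed.

Lemma frame_plus_reconstruction (x : A) :
  \sum_i ip_plus q star x (frame_plus q star a c i) * frame_plus q star a c i = x.
Proof.
rewrite sum_ip_plus_frame.
under eq_bigr do rewrite /frame_plus mulrZ.
by rewrite -scaler_sumr tmat_unitary mulrZ mulr1 scalerA mulfV // scale1r.
Qed.

Lemma frame_minus_reconstruction (x : A) :
  \sum_i ip_minus q star x (frame_minus q star a c i) * frame_minus q star a c i = x.
Proof.
rewrite sum_ip_minus_frame.
under eq_bigr do rewrite /frame_minus mulrZ.
by rewrite -scaler_sumr tmat_unitary mulrZ mulr1 scalerA mulVf // scale1r.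
Qed.

Variables (de df dk dkinv : A -> A).
Hypothesis HU : is_Uq_action q star a c de df dk dkinv.

Lemma sum_ip_plus_frame_df (x : A) :
  \sum_i ip_plus q star x (frame_plus q star a c i) * df (frame_plus q star a c i) = 0.
Proof.
rewrite sum_ip_plus_frame.
under eq_bigr do rewrite /frame_plus (raw_linearZ (df_lin HU)) (df_tp HU) mulrZ.
by rewrite -scaler_sumr tmat_unitary /= scaler0 mulr0 scaler0.
Qed.

Lemma sum_ip_minus_frame_de (x : A) :
  \sum_i ip_minus q star x (frame_minus q star a c i) * de (frame_minus q star a c i) = 0.
Proof.
rewrite sum_ip_minus_frame.
under eq_bigr do rewrite /frame_minus (raw_linearZ (de_lin HU)) (de_tm HU) mulrZ.
by rewrite -scaler_sumr tmat_unitary /= scaler0 mulr0 scaler0.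
Qed.

End SpinorFrames.

(* The frame identities hold on all of A. *)
Theorem mainTheorem10 (C : numClosedFieldType) (A : lalgType C) (q : C)
  (star : A -> A) (a c : A) (de df dk dkinv : A -> A) :
  0 < q -> q <= 1 ->
  is_SUq2 q star a c ->
  is_Uq_action q star a c de df dk dkinv ->
  forall xp xm : A,
    in_Splus q star a c dk xp -> in_Sminus q star a c dk xm ->
    Dirac de df (xp, xm) = clifford_grassmann q star a c de df (xp, xm).
Proof.
move=> q_gt0 _ HS HU xp xm _ _.
rewrite /clifford_grassmann (sum_commD_plus (de_lin HU) (df_lin HU)).
rewrite (sum_commD_minus (de_lin HU) (df_lin HU)).
rewrite (frame_plus_reconstruction q_gt0 HS) (frame_minus_reconstruction q_gt0 HS).
rewrite (sum_ip_plus_frame_df q_gt0 HS HU) (sum_ip_minus_frame_de q_gt0 HS HU) !subr0.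
by congr pair; rewrite ?addr0 ?add0r.
Qed.
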